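(* Let $(X,\nu)$ be a $\sigma$-finite measure space, let $\omega:X\to(0,\infty)$ be a measurable function, and let $1<q_0\le p_0<\infty$ with $\frac1{p_0}+\frac1{q_0}=1$. Then for every $f\in L^1(X,\nu)\cap L^{q_0}(X,\omega^{1/p_0})$ with $\|f\|_1=1$, the map \[ [p_0,\infty)\to\mathbb{R},\qquad p\mapsto -p\log\|f\|_{q,\omega^{1/p}}, \] where $q$ is given by $\frac1p+\frac1q=1$, is increasing. Equivalently, the map $(1,q_0]\to\mathbb{R}$, $q\mapsto -p\log\|f\|_{q,\omega^{1/p}}$ is decreasing.
   Context: For a measurable $\omega:X\to(0,\infty)$ and $1\le p<\infty$, the weighted space $L^p(X,\omega)$ consists of measurable $f:X\to\mathbb{C}$ with $\|f\|_{p,\omega}=\big(\int_X|f|^p\omega^p\,d\nu\big)^{1/p}<\infty$. Thus $\|f\|_{q,\omega^{1/p}}=\big(\int_X|f|^q\omega^{q/p}\,d\nu\big)^{1/q}$, and $\|f\|_1=\int_X|f|\,d\nu$. *)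

From HB Require Import structures.
From mathcomp Require Import all_boot all_order all_algebra.
From mathcomp Require Import all_classical all_reals all_analysis.
From mathcomp Require Import complex.
Set Implicit Arguments. Unset Strict Implicit. Unset Printing Implicit Defensive.
Import Order.TTheory GRing.Theory Num.Theory.
Local Open Scope ring_scope.

(* Complex-valued functions are modelled as T -> R[i] (mathcomp-real-closed's
   complex numbers); |z| is [ComplexField.Normc.normc z] = sqrt (Re z ^ 2 + Im z ^ 2). *)

Definition cmeasurable d (T : measurableType d) (R : realType)
  (f : T -> R[i]) : Prop :=
  measurable_fun setT (fun x => complex.Re (f x)) /\
  measurable_fun setT (fun x => complex.Im (f x)).

Definition wnorm d (T : measurableType d) (R : realType)
  (mu : {measure set T -> \bar R}) (p : R) (w : T -> R) (f : T -> R[i])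
  : \bar R :=
  Lnorm mu p%:E (fun x => (ComplexField.Normc.normc (f x) * w x)%:E).

From HB Require Import structures.
From mathcomp Require Import all_boot all_order all_algebra.
From mathcomp Require Import all_classical all_reals all_analysis.
From mathcomp Require Import complex.
From mathcomp Require Import ring lra measurable_realfun.
Import Order.TTheory GRing.Theory Num.Theory.
Local Open Scope ring_scope.

(* Put g = |f|, q = p/(p-1) and J(p) = \int (g w^(1/p))^q, so that
   -p log ||f||_{q,w^(1/p)} = -(p-1) log J(p).  For 1 < pa <= pb and
   t = (pa-1)/(pb-1) in (0,1], the integrand of J(pb) is g^(1-t) times the
   t-th power of the integrand of J(pa); Hoelder with exponents 1/(1-t), 1/t
   and \int g = 1 give J(pb) <= J(pa)^t, i.e. (pb-1) log J(pb) <= (pa-1) log J(pa).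
   Taking pa = p0 shows that J is finite on [p0, oo), and \int g = 1 makes it
   positive, so the logarithms are those of genuine positive reals. *)

Lemma normc_ge0 {R : rcfType} (z : R[i]) : 0 <= ComplexField.Normc.normc z.
Proof. by case: z => a b; exact: sqrtr_ge0. Qed.

Section wpow.
Context {R : realType}.
Implicit Types p a w : R.

(* At a = |f x| this is the integrand of ||f||_{q,w^(1/p)}^q, q = (1 - 1/p)^-1. *)
Definition wpow p a w := (a * w `^ p^-1) `^ (1 - p^-1)^-1.

Lemma wpow_ge0 p a w : 0 <= wpow p a w.
Proof. exact: powR_ge0. Qed.

Lemma wpow_eq0 p a w : 0 < w -> wpow p a w = 0 -> a = 0.
Proof.
move=> w_gt0 /powR_eq0_eq0/eqP; rewrite mulf_eq0 => /orP[/eqP //|].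
by rewrite gt_eqF // powR_gt0.
Qed.

Lemma wpow_interpolation pa pb a w : 0 <= a -> 0 < w -> 1 < pa -> 1 < pb ->
  wpow pb a w =
  a `^ (1 - (pa - 1) / (pb - 1)) * wpow pa a w `^ ((pa - 1) / (pb - 1)).
Proof.
move=> a_ge0 w_gt0 pa_gt1 pb_gt1.
have t_gt0 : 0 < (pa - 1) / (pb - 1) by apply: divr_gt0; lra.
have [->|a_neq0] := eqVneq a 0.
  have conj_neq0 p : 1 < p -> (1 - p^-1)^-1 != 0.
    by move=> p_gt1; rewrite invr_eq0 subr_eq0 eq_sym invr_eq1 gt_eqF.
  rewrite /wpow !mul0r (powR0 (conj_neq0 _ pa_gt1)) (powR0 (conj_neq0 _ pb_gt1)).
  by rewrite (powR0 (lt0r_neq0 t_gt0)) mulr0.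
have a_gt0 : 0 < a by rewrite lt_def a_neq0.
have wpow_gt0 p : 0 < wpow p a w by rewrite powR_gt0 // mulr_gt0 // powR_gt0.
have rhs_gt0 : 0 < a `^ (1 - (pa - 1) / (pb - 1)) * wpow pa a w `^ ((pa - 1) / (pb - 1)).
  by apply: mulr_gt0; apply: powR_gt0.
apply: ln_inj; rewrite ?posrE ?wpow_gt0 //.
have ln_wpow p : ln (wpow p a w) = (1 - p^-1)^-1 * (ln a + p^-1 * ln w).
  by rewrite ln_powR lnM ?posrE ?powR_gt0 // ln_powR.
rewrite lnM ?posrE ?(powR_gt0 _ a_gt0) ?(powR_gt0 _ (wpow_gt0 pa)) //.
rewrite ln_wpow 2!ln_powR ln_wpow; field.
by rewrite !gt_eqF //; lra.
Qed.

End wpow.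

Section conjugate_log.
Context {R : realType}.
Implicit Types p j : R.

Lemma ln_conjugate_le p1 p2 j1 j2 : p1 != 0 -> 1 < p2 -> 0 < j2 ->
  j2 <= j1 `^ ((p1 - 1) / (p2 - 1)) ->
  - p1 * ln (j1 `^ (1 - p1^-1)) <= - p2 * ln (j2 `^ (1 - p2^-1)).
Proof.
move=> p1_neq0 p2_gt1 j2_gt0 j2_le.
have p2B_gt0 : 0 < p2 - 1 by rewrite subr_gt0.
have ln_le : (p2 - 1) * ln j2 <= (p1 - 1) * ln j1.
  have -> : (p1 - 1) * ln j1 = (p2 - 1) * ((p1 - 1) / (p2 - 1) * ln j1).
    by field; rewrite gt_eqF.
  by rewrite ler_pM2l // -ln_powR ler_ln // posrE (lt_le_trans j2_gt0).
have conjE p (L : R) : p != 0 -> - p * ((1 - p^-1) * L) = (1 - p) * L.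
  by move=> ?; field.
have p2_neq0 : p2 != 0 by rewrite gt_eqF // (lt_trans ltr01).
rewrite !ln_powR !conjE //; lra.
Qed.

Lemma ln_fine_conjugate_le p1 p2 (J1 J2 : \bar R) : p1 != 0 -> 1 < p2 ->
  (0 <= J1 < +oo)%E -> (0 < J2)%E -> (J2 <= J1 `^ ((p1 - 1) / (p2 - 1)))%E ->
  - p1 * ln (fine (J1 `^ (1 - p1^-1))) <= - p2 * ln (fine (J2 `^ (1 - p2^-1))).
Proof.
move=> p1_neq0 p2_gt1 /andP[J1_ge0 J1_fin] J2_gt0 J2_le.
have J2_fin : (J2 < +oo)%E by rewrite (le_lt_trans J2_le) // poweR_lty.
rewrite !fine_poweR; apply: ln_conjugate_le => //; first by rewrite fine_gt0 // J2_gt0.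
rewrite -fine_poweR; apply: fine_le J2_le; first by rewrite ge0_fin_numE // ltW.
by apply: fin_num_poweR; rewrite ge0_fin_numE.
Qed.

End conjugate_log.

Section integral_interpolation.
Context {d} {T : measurableType d} {R : realType}.
Variable mu : {measure set T -> \bar R}.
Local Open Scope ereal_scope.

Lemma Lnorm_powRV (h : T -> R) (s : R) : (forall x, 0 <= h x)%R -> s != 0%R ->
  'N[mu]_s%:E[EFin \o (fun x => h x `^ s^-1)%R] = (\int[mu]_x (h x)%:E) `^ s^-1.
Proof.
move=> h_ge0 s_neq0; rewrite unlock /=; congr (_ `^ _); apply: eq_integral => x _.
by rewrite /= ger0_norm ?powR_ge0 // -powRrM mulVf // powRr1.
Qed.

Lemma hoelder_interpolation (g h : T -> R) (t : R) :
  measurable_fun setT g -> measurable_fun setT h ->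
  (forall x, 0 <= g x)%R -> (forall x, 0 <= h x)%R -> (0 < t < 1)%R ->
  \int[mu]_x (g x `^ (1 - t) * h x `^ t)%:E <=
    (\int[mu]_x (g x)%:E) `^ (1 - t) * (\int[mu]_x (h x)%:E) `^ t.
Proof.
move=> mg mh g_ge0 h_ge0 /andP[t_gt0 t_lt1].
have := @hoelder _ _ _ mu (fun x => g x `^ ((1 - t)^-1)^-1)%R
  (fun x => h x `^ (t^-1)^-1)%R (1 - t)^-1 t^-1
  (measurableT_comp (measurable_powR _) mg) (measurableT_comp (measurable_powR _) mh).
rewrite !Lnorm_powRV ?invr_neq0 ?gt_eqF ?subr_gt0 // !invrK Lnorm1.
rewrite !invr_gt0 subr_gt0 subrK => /(_ t_lt1 t_gt0 erefl); apply: le_trans.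
rewrite le_eqVlt; apply/orP; left; apply/eqP; apply: eq_integral => x _.
by rewrite gee0_abs // lee_fin mulr_ge0 ?powR_ge0.
Qed.

Lemma measurable_normc {f : T -> R[i]} :
  cmeasurable f -> measurable_fun setT (fun x => ComplexField.Normc.normc (f x)).
Proof.
case=> mre mim.
have -> : (fun x => ComplexField.Normc.normc (f x)) =
    Num.sqrt \o (fun x => complex.Re (f x) ^+ 2 + complex.Im (f x) ^+ 2)%R.
  by apply/funext => x /=; case: (f x).
apply: measurableT_comp; first exact: continuous_measurable_fun (@sqrt_continuous R).
by apply: measurable_funD; apply: measurable_funX.
Qed.

Lemma wnorm_conjugateE (p : R) (w : T -> R) (f : T -> R[i]) :
  wnorm mu (1 - p^-1)^-1 (fun x => w x `^ p^-1)%R f =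
  (\int[mu]_x (wpow p (ComplexField.Normc.normc (f x)) (w x))%:E) `^ (1 - p^-1).
Proof.
rewrite /wnorm unlock /= invrK; congr (_ `^ _); apply: eq_integral => x _.
by rewrite ger0_norm // mulr_ge0 ?powR_ge0 ?normc_ge0.
Qed.

Lemma measurable_wpow (p : R) {g w : T -> R} :
  measurable_fun setT g -> measurable_fun setT w ->
  measurable_fun setT (fun x => wpow p (g x) (w x)).
Proof.
move=> mg mw; apply: measurableT_comp (measurable_powR _) _.
exact: measurable_funM mg (measurableT_comp (measurable_powR _) mw).
Qed.

Lemma integral_wpow_le (g w : T -> R) (pa pb : R) :
  measurable_fun setT g -> measurable_fun setT w ->
  (forall x, 0 <= g x)%R -> (forall x, 0 < w x)%R -> (1 < pa)%R -> (pa <= pb)%R ->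
  \int[mu]_x (wpow pb (g x) (w x))%:E <=
    (\int[mu]_x (g x)%:E) `^ (1 - (pa - 1) / (pb - 1)) *
    (\int[mu]_x (wpow pa (g x) (w x))%:E) `^ ((pa - 1) / (pb - 1)).
Proof.
move=> mg mw g_ge0 w_gt0 pa_gt1 pa_le_pb.
have [<-|pa_neq_pb] := eqVneq pa pb.
  rewrite divff ?subr_eq0 ?gt_eqF // subrr poweRe0 mul1e poweRe1 //.
  by apply: integral_ge0 => x _; rewrite lee_fin wpow_ge0.
have pb_gt1 : (1 < pb)%R by exact: lt_le_trans pa_le_pb.
have t_gt0 : (0 < (pa - 1) / (pb - 1))%R by apply: divr_gt0; rewrite subr_gt0.
have t_lt1 : ((pa - 1) / (pb - 1) < 1)%R.
  by rewrite ltr_pdivrMr ?subr_gt0 // mul1r ltrBlDr subrK lt_def eq_sym pa_neq_pb.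
under eq_integral do rewrite (wpow_interpolation _ _ _ _ (g_ge0 _) (w_gt0 _) pa_gt1 pb_gt1).
apply: hoelder_interpolation; rewrite ?t_gt0 ?t_lt1 //.
  exact: measurable_wpow.
by move=> x; apply: wpow_ge0.
Qed.

Lemma integral_wpow_gt0 (g w : T -> R) (p : R) :
  measurable_fun setT g -> measurable_fun setT w ->
  (forall x, 0 <= g x)%R -> (forall x, 0 < w x)%R ->
  0 < \int[mu]_x (g x)%:E -> 0 < \int[mu]_x (wpow p (g x) (w x))%:E.
Proof.
move=> mg mw g_ge0 w_gt0; rewrite !lt0e => /andP[int_g_neq0 _].
rewrite integral_ge0 ?andbT; last by move=> x _; rewrite lee_fin wpow_ge0.
apply: contra int_g_neq0 => /eqP int_wpow0.
have mwpow : measurable_fun setT (fun x => (wpow p (g x) (w x))%:E).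
  exact/measurable_EFinP/measurable_wpow.
have /(ae_eq_integral_abs mu measurableT mwpow) wpow_ae0 :
    \int[mu]_x `|(wpow p (g x) (w x))%:E| = 0.
  by rewrite -int_wpow0; apply: eq_integral => x _; rewrite gee0_abs // lee_fin wpow_ge0.
have g_ae0 : ae_eq mu setT (EFin \o g) (cst 0).
  by apply: filterS wpow_ae0 => x /= wpow0 /wpow0 [] /wpow_eq0 ->.
rewrite (ae_eq_integral _ _ measurableT _ _ g_ae0) ?integral0 //.
exact/measurable_EFinP.
Qed.
End integral_interpolation.

Theorem proposition2p1 (d : measure_display) (X : measurableType d)
  (R : realType) (nu : {measure set X -> \bar R})
  (omega : X -> R) (p0 q0 : R) (f : X -> R[i]) :
  sigma_finite setT nu ->
  measurable_fun setT omega -> (forall x, 0 < omega x) ->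
  1 < q0 -> q0 <= p0 -> p0^-1 + q0^-1 = 1 ->
  cmeasurable f ->
  (wnorm nu 1%R (fun=> 1%R) f < +oo)%E ->
  (wnorm nu q0 (fun x => (omega x `^ p0^-1)%R) f < +oo)%E ->
  wnorm nu 1%R (fun=> 1%R) f = 1%E ->
  forall p1 p2 : R, p0 <= p1 -> p1 <= p2 ->
    let q1 := (1 - p1^-1)^-1 in
    let q2 := (1 - p2^-1)^-1 in
    - p1 * ln (fine (wnorm nu q1 (fun x => omega x `^ p1^-1) f))
    <= - p2 * ln (fine (wnorm nu q2 (fun x => omega x `^ p2^-1) f)).
Proof.
move=> _ momega omega_gt0 q0_gt1 q0_le_p0 conj_p0q0 mf _ fin_p0 norm1 p1 p2 p0_le_p1 p1_le_p2 /=.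
pose g x := ComplexField.Normc.normc (f x).
have mg : measurable_fun setT g := measurable_normc mf.
have g_ge0 x : 0 <= g x := normc_ge0 (f x).
have int_g : (\int[nu]_x (g x)%:E = 1)%E.
  rewrite -norm1 /wnorm Lnorm1; apply: eq_integral => x _.
  by rewrite mulr1 gee0_abs // lee_fin; apply: g_ge0.
have p0_gt1 : 1 < p0 by exact: lt_le_trans q0_le_p0.
pose J p := (\int[nu]_x (wpow p (g x) (omega x))%:E)%E.
have J_le pa pb : 1 < pa -> pa <= pb -> (J pb <= J pa `^ ((pa - 1) / (pb - 1)))%E.
  move=> pa_gt1 pa_le_pb.
  have := integral_wpow_le nu g omega pa pb mg momega g_ge0 omega_gt0 pa_gt1 pa_le_pb.
  by rewrite int_g poweR1r mul1e.
have J_p0_fin : (J p0 < +oo)%E.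
  have q0E : q0 = (1 - p0^-1)^-1 by rewrite -conj_p0q0 addrC addKr invrK.
  move: fin_p0; rewrite q0E wnorm_conjugateE; apply: lty_poweRy.
  by rewrite subr_eq0 eq_sym invr_eq1 gt_eqF.
have p1_gt1 : 1 < p1 by exact: lt_le_trans p0_le_p1.
rewrite !wnorm_conjugateE; apply: ln_fine_conjugate_le (J_le _ _ p1_gt1 p1_le_p2).
- by rewrite gt_eqF // (lt_trans ltr01).
- exact: lt_le_trans p1_le_p2.
- rewrite integral_ge0 => [|x _]; last by rewrite lee_fin wpow_ge0.
  by apply: le_lt_trans (J_le _ _ p0_gt1 p0_le_p1) _; exact: poweR_lty.
- by apply: integral_wpow_gt0 => //; rewrite int_g lte01.
Qed.
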